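(* Let $N\ge 1$ be an integer and let $g,h,u_m,\alpha_1,\delta_h,\delta_q$ be real numbers. Define $c_i=\frac{i+1}{2i+1}\alpha_1$ and $a_i=\frac{i-1}{2i-1}\alpha_1$ for $i=2,\dots,N$. Let $\boldsymbol{A}_H\in\mathbb{R}^{(N+3)\times(N+3)}$ be the matrix (rows and columns indexed $1,\dots,N+3$) whose only nonzero entries are: - row 1: entry $(1,2)=1$; - row 2: $(2,1)=gh-u_m^2-\tfrac13\alpha_1^2$, $(2,2)=2u_m$, $(2,3)=\tfrac23\alpha_1$, $(2,N+3)=gh$; - rows $3,\dots,N+2$ (the ''moment block'', row $k+2$ corresponding to moment $k=1,\dots,N$): diagonal entries $(k+2,k+2)=u_m$ for $k=1,\dots,N$; superdiagonal entries $(k+2,k+3)=c_{k+1}$ for $k=1,\dots,N-1$; subdiagonal entries $(k+2,k+1)=a_k$ for $k=2,\dots,N$; in addition $(3,1)=-2u_m\alpha_1$, $(3,2)=2\alpha_1$, and, if $N\ge2$, $(4,1)=-\tfrac23\alpha_1^2$; - row $N+3$: $(N+3,1)=\delta_h$ and $(N+3,j)=\delta_q$ for $j=2,\dots,N+2$, $(N+3,N+3)=0$. Let $A_2\in\mathbb{R}^{N\times N}$ be the tridiagonal matrix with zero diagonal, superdiagonal entries $c_2,\dots,c_N$ and subdiagonal entries $a_2,\dots,a_N$ (for $N=1$, $A_2$ is the $1\times1$ zero matrix). Then the characteristic polynomial $\chi_A(\lambda)=\det(\boldsymbol{A}_H-\lambda I)$ satisfies $$\chi_A(\lambda)=\Big[(-\lambda)\big((\lambda-u_m)^2-gh-\alpha_1^2\big)+gh\,(\delta_h+\lambda\delta_q+2\alpha_1\delta_q)\Big]\cdot\chi_{A_2}(\lambda-u_m),$$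 where $\chi_{A_2}(\lambda-u_m)=\det\big(A_2-(\lambda-u_m)I\big)$.
   Context: $\boldsymbol{A}_H$ is the system matrix of the Hyperbolic Shallow Water Exner Moment (HSWEM) model in the conservative variables $(h,hu_m,h\alpha_1,\dots,h\alpha_N,b)$, where $h$ is water height, $g$ gravitational acceleration, $u_m$ mean velocity, $\alpha_1,\dots,\alpha_N$ the Legendre moment coefficients of the vertical velocity profile, $b$ the bottom, and $\delta_h=\partial_h Q_b$, $\delta_q=\partial_{hu_m}Q_b$ are partial derivatives of the solid transport discharge $Q_b$; for the statement these are just real parameters. *)

From mathcomp Require Import all_boot all_order all_algebra.
Set Implicit Arguments. Unset Strict Implicit. Unset Printing Implicit Defensive.
Import Order.TTheory GRing.Theory Num.Theory.
Local Open Scope ring_scope.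

Section HSWEM.
Variable R : realFieldType.

Definition coef_c (al : R) (i : nat) : R := (i.+1)%:R / (i.*2.+1)%:R * al.
Definition coef_a (al : R) (i : nat) : R := (i.-1)%:R / (i.*2.-1)%:R * al.

(* Entry (r, col) of A_H, with 1-based indices r, col in 1..N+3. *)
Definition AH_entry (N : nat) (g h um al dh dq : R) (r col : nat) : R :=
  if r == 1%N then (if col == 2%N then 1 else 0)
  else if r == 2%N then
    (if col == 1%N then g * h - um ^+ 2 - al ^+ 2 / 3%:R
     else if col == 2%N then 2%:R * um
     else if col == 3%N then 2%:R / 3%:R * al
     else if col == N + 3 then g * h
     else 0)
  else if r == N + 3 then
    (if col == 1%N then dh
     else if (2 <= col <= N + 2)%N then dq
     else 0)
  else (* moment rows r = k+2, k = 1..N *)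
    (if col == r then um
     else if (col == r.+1) && (r.+1 <= N + 2)%N then coef_c al (r - 2).+1
     else if (col.+1 == r) && (4 <= r)%N then coef_a al (r - 2)
     else if (r == 3%N) && (col == 1%N) then - (2%:R * um * al)
     else if (r == 3%N) && (col == 2%N) then 2%:R * al
     else if (r == 4%N) && (col == 1%N) then - (2%:R / 3%:R * al ^+ 2)
     else 0).

Definition AH (N : nat) (g h um al dh dq : R) : 'M[R]_(N + 3) :=
  \matrix_(i, j) AH_entry N g h um al dh dq i.+1 j.+1.

(* The NxN tridiagonal matrix A_2: zero diagonal, superdiagonal c_2..c_N,
   subdiagonal a_2..a_N (1-based row k: (k,k+1) = c_{k+1}, (k,k-1) = a_k). *)
Definition A2 (N : nat) (al : R) : 'M[R]_N :=
  \matrix_(i, j)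
    (if j.+1 == i.+2 then coef_c al i.+2
     else if j.+2 == i.+1 then coef_a al i.+1
     else 0).

End HSWEM.

From Pilot Require Import Defs.
From mathcomp Require Import all_boot all_order all_algebra zify ring.
Import GRing.Theory.
Local Open Scope ring_scope.

(* Adding lam times the second column and 2 al times the third column to the
   first turns the first row of A_H - lam I into the unit row e_2 and clears the
   first column on every moment row.  Expanding along the first row, then along
   the first column, leaves two minors whose last columns have a single nonzero
   entry (-lam, resp. g h); expanding those leaves the moment block
   A_2 - (lam - um) I in both cases. *)

Lemma bump_lt h i : (i < h)%N -> bump h i = i.
Proof. by move=> lt_ih; rewrite /bump leqNgt lt_ih. Qed.

Section NatIndexedMatrices.

Context {R : comRingType}.

Definition mx_of n (f : nat -> nat -> R) : 'M[R]_n := \matrix_(i, j) f i j.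

Lemma eq_mx_of n (f f' : nat -> nat -> R) :
  (forall i j, (i < n)%N -> (j < n)%N -> f i j = f' i j) -> mx_of n f = mx_of n f'.
Proof. by move=> ff'; apply/matrixP => i j; rewrite !mxE ff'. Qed.

Lemma det_mx_of_cast m n f : m = n -> \det (mx_of m f) = \det (mx_of n f).
Proof. by move->. Qed.

Lemma cofactor_mx_of n f (i0 j0 : 'I_n.+1) :
  cofactor (mx_of n.+1 f) i0 j0 =
  (-1) ^+ (i0 + j0) * \det (mx_of n (fun i j => f (bump i0 i) (bump j0 j))).
Proof. by rewrite /cofactor; congr (_ * \det _); apply/matrixP => i j; rewrite !mxE. Qed.

Lemma expand_det_row1 n (A : 'M[R]_n) i0 j0 :
  (forall j, j != j0 -> A i0 j = 0) -> \det A = A i0 j0 * cofactor A i0 j0.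
Proof.
move=> A0; rewrite (expand_det_row _ i0) (bigD1 j0) //= big1 ?addr0 // => j /A0->.
by rewrite mul0r.
Qed.

Lemma expand_det_col1 n (A : 'M[R]_n) i0 j0 :
  (forall i, i != i0 -> A i j0 = 0) -> \det A = A i0 j0 * cofactor A i0 j0.
Proof.
move=> A0; rewrite -det_tr (@expand_det_row1 _ _ j0 i0) ?cofactor_tr ?mxE // => i.
by rewrite mxE; apply: A0.
Qed.

Lemma expand_det_col2 n (A : 'M[R]_n) i1 i2 j0 : i1 != i2 ->
    (forall i, i != i1 -> i != i2 -> A i j0 = 0) ->
  \det A = A i1 j0 * cofactor A i1 j0 + A i2 j0 * cofactor A i2 j0.
Proof.
move=> i12 A0; rewrite (expand_det_col _ j0) (bigD1 i1) //= (bigD1 i2) ?(eq_sym i2) //=.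
by rewrite big1 ?addr0 // => i /andP[? ?]; rewrite A0 ?mul0r.
Qed.

Lemma det_add_col_scale n (A : 'M[R]_n) j0 j1 a : j0 != j1 ->
  \det (\matrix_(i, j) (A i j + (j == j0)%:R * (a * A i j1))) = \det A.
Proof.
move=> j01; rewrite -det_tr -[RHS]det_tr.
pose C := \matrix_(i, j) A^T (if i == j0 then j1 else i) j.
rewrite (determinant_multilinear (B := A^T) (C := C) (i0 := j0) (b := 1) (c := a)).
- rewrite (determinant_alternate (A := C) j01) ?mulr0 ?addr0 ?mul1r // => j.
  by rewrite !mxE eqxx eq_sym (negbTE j01).
- by apply/rowP => j; rewrite !mxE eqxx !mul1r.
- apply/matrixP => i j.
  by rewrite !mxE [lift _ _ == _]eq_sym (negbTE (neq_lift _ _)) mul0r addr0.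
- rewrite /C; apply/matrixP => i j.
  by rewrite !mxE [lift _ _ == _]eq_sym (negbTE (neq_lift _ _)) mul0r addr0.
Qed.

Lemma det_mx_of_add_col n f (j0 j1 : nat) a :
    (j0 < n)%N -> (j1 < n)%N -> j0 != j1 ->
  \det (mx_of n (fun i j => f i j + (j == j0)%:R * (a * f i j1))) = \det (mx_of n f).
Proof.
move=> lt_j0n lt_j1n j01.
rewrite -[RHS](@det_add_col_scale _ _ (Ordinal lt_j0n) (Ordinal lt_j1n) a) //.
by congr (\det _); apply/matrixP => i j; rewrite !mxE.
Qed.

Lemma expand_det_mx_of_row0_at1 n f :
    (forall j, (j < n.+2)%N -> j != 1%N -> f 0%N j = 0) ->
  \det (mx_of n.+2 f) = - (f 0%N 1%N * \det (mx_of n.+1 (fun i j => f i.+1 (bump 1 j)))).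
Proof.
move=> f0; rewrite (@expand_det_row1 _ _ ord0 (@Ordinal n.+2 1 isT)).
  by rewrite mxE cofactor_mx_of expr1 mulN1r mulrN.
by move=> j j1; rewrite mxE f0.
Qed.

Lemma expand_det_mx_of_lastcol_corner n f :
    (forall i, (i < n)%N -> f i n = 0) ->
  \det (mx_of n.+1 f) = f n n * \det (mx_of n f).
Proof.
move=> f0; rewrite (@expand_det_col1 _ _ ord_max ord_max).
  rewrite mxE cofactor_mx_of exprD -expr2 sqrr_sign mul1r; congr (_ * \det _).
  by apply: eq_mx_of => i j lt_in lt_jn; rewrite !bump_lt.
move=> i /negbTE ni; rewrite mxE f0 //.
by have := ltn_ord i; rewrite ltnS leq_eqVlt -[_ == _]/(i == ord_max) ni.
Qed.

Lemma expand_det_mx_of_lastcol_top n f :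
    (forall i, (0 < i <= n)%N -> f i n = 0) ->
  \det (mx_of n.+1 f) = (-1) ^+ n * f 0%N n * \det (mx_of n (fun i j => f i.+1 j)).
Proof.
move=> f0; rewrite (@expand_det_col1 _ _ ord0 ord_max).
  rewrite mxE cofactor_mx_of add0n mulrCA mulrA; congr (_ * \det _).
  by apply: eq_mx_of => i j _ lt_jn; rewrite (bump_lt _ _ lt_jn).
by move=> i ni; rewrite mxE f0 // lt0n ni -ltnS ltn_ord.
Qed.

Lemma expand_det_mx_of_col0_ends n f :
    (forall i, (0 < i <= n)%N -> f i 0%N = 0) ->
  \det (mx_of n.+2 f) = f 0%N 0%N * \det (mx_of n.+1 (fun i j => f i.+1 j.+1))
                        - (-1) ^+ n * f n.+1 0%N * \det (mx_of n.+1 (fun i j => f i j.+1)).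
Proof.
move=> f0; rewrite (@expand_det_col2 _ _ ord0 ord_max ord0) //.
  rewrite !mxE !cofactor_mx_of -[nat_of_ord ord0]/0%N -[nat_of_ord ord_max]/n.+1.
  have -> : mx_of n.+1 (fun i j => f (bump n.+1 i) (bump 0 j)) = mx_of n.+1 (fun i j => f i j.+1).
    by apply: eq_mx_of => i j lt_in _; rewrite (bump_lt _ _ lt_in).
  rewrite !addn0 expr0 mul1r exprS mulN1r.
  ring.
move=> i ni0 nin; rewrite mxE f0 // lt0n ni0 -ltnS ltn_neqAle.
by rewrite -ltnS ltn_ord andbT; exact: nin.
Qed.

End NatIndexedMatrices.

Section HSWEMSystemMatrix.

Variables (R : realFieldType) (N : nat) (g h um al dh dq lam : R).
Hypothesis N_gt0 : (0 < N)%N.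

Definition shifted_AH i j := AH_entry N g h um al dh dq i.+1 j.+1 - lam *+ (i == j).

(* The multipliers are those that clear the first column on the moment rows:
   2 al lam + 2 al (um - lam) = 2 um al on the first one, and
   2 al a_2 = 2/3 al^2 on the second one, since a_2 = al / 3. *)
Definition reduced_AH i j :=
  shifted_AH i j + (j == 0)%:R * (lam * shifted_AH i 1 + 2%:R * al * shifted_AH i 2).

(* In Defs, [N + 3] is written in ring_scope, hence is the ring addition on nat. *)
Ltac compute_entry := rewrite /reduced_AH /shifted_AH /AH_entry -[(N + 3)%R]/(N + 3)%N addn3
  ?addn2 ?eqSS ?ltnS ?subSS ?subn0 ?eqxx ?mulrb /= ?mul0r ?addr0;
  repeat (case: ifP => /= ?); try (exfalso; lia).

Lemma reduced_AH_row0 j : reduced_AH 0 j = (j == 1)%:R.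
Proof. by compute_entry; ring. Qed.

Lemma reduced_AH_10 : reduced_AH 1 0 = g * h - (lam - um) ^+ 2 + al ^+ 2.
Proof. by compute_entry; field. Qed.

Lemma reduced_AH_last0 : reduced_AH N.+2 0 = dh + lam * dq + 2%:R * al * dq.
Proof. by compute_entry; field. Qed.

Lemma reduced_AH_moment0 k : (k < N)%N -> reduced_AH k.+2 0 = 0.
Proof.
move=> lt_kN; compute_entry; try ring.
have -> : k = 1%N by lia.
by rewrite /coef_a -[(2.*2).-1]/3%N -[2.-1]/1%N; field.
Qed.

Lemma reduced_AH_1last : reduced_AH 1 N.+2 = g * h.
Proof. by compute_entry; ring. Qed.

Lemma reduced_AH_lastlast : reduced_AH N.+2 N.+2 = - lam.
Proof. by compute_entry; ring. Qed.

Lemma reduced_AH_moment_last k : (k < N)%N -> reduced_AH k.+2 N.+2 = 0.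
Proof. by move=> lt_kN; compute_entry; ring. Qed.

Lemma mx_of_reduced_AH_moments :
  mx_of N (fun i j => reduced_AH i.+2 j.+2) = A2 N al - (lam - um)%:M.
Proof.
apply/matrixP => i j; rewrite !mxE -[i == j]/(i == j :> nat).
move: (ltn_ord i) (ltn_ord j) => lt_iN lt_jN.
by compute_entry; ring.
Qed.

Lemma det_shifted_AH_reduced :
  \det (mx_of N.+3 shifted_AH) = \det (mx_of N.+3 reduced_AH).
Proof.
rewrite -(@det_mx_of_add_col _ _ _ 0 1 lam) // -(@det_mx_of_add_col _ _ _ 0 2 (2%:R * al)) //.
by congr (\det _); apply: eq_mx_of => i [|j] _ _; rewrite /reduced_AH /=; ring.
Qed.

Lemma det_reduced_AH :
  \det (mx_of N.+3 reduced_AH) =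
    (lam * (g * h - (lam - um) ^+ 2 + al ^+ 2) + g * h * (dh + lam * dq + 2%:R * al * dq))
    * \det (A2 N al - (lam - um)%:M).
Proof.
rewrite expand_det_mx_of_row0_at1; last by move=> j _ /negbTE j1; rewrite reduced_AH_row0 j1.
rewrite reduced_AH_row0 mul1r expand_det_mx_of_col0_ends; last first.
  by move=> [|i] // /= lt_iN; apply: reduced_AH_moment0.
rewrite expand_det_mx_of_lastcol_corner; last by move=> i lt_iN; apply: reduced_AH_moment_last.
rewrite expand_det_mx_of_lastcol_top; last first.
  by move=> [|i] // /= lt_iN; apply: reduced_AH_moment_last.
rewrite mx_of_reduced_AH_moments reduced_AH_10 reduced_AH_last0 reduced_AH_lastlast reduced_AH_1last.
rewrite -signr_odd; case: (odd N); rewrite ?expr0 ?expr1; ring.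
Qed.

End HSWEMSystemMatrix.

Theorem theorem1 (R : realFieldType) (N : nat) (hN : (1 <= N)%N)
    (g h um al dh dq : R) (lam : R) :
  \det (AH N g h um al dh dq - lam%:M) =
    ((- lam) * ((lam - um) ^+ 2 - g * h - al ^+ 2)
       + g * h * (dh + lam * dq + 2%:R * al * dq))
    * \det (A2 N al - (lam - um)%:M).
Proof.
have -> : AH N g h um al dh dq - lam%:M = mx_of (N + 3) (shifted_AH R N g h um al dh dq lam).
  by apply/matrixP => i j; rewrite !mxE.
rewrite (det_mx_of_cast _ _ _ (addn3 N)) det_shifted_AH_reduced det_reduced_AH //.
ring.
Qed.
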